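(* Let $\Omega = \{-1\} \cup [0,\infty)$, let $E$ be the Banach space of all bounded continuous real functions on $\Omega$ with the supremum norm $\|\cdot\|$, and let $$C = \{ x \in E : 0 \le x(u) \le 1 \text{ for all } u \in \Omega,\ |x(u_1)-x(u_2)| \le |u_1-u_2| \text{ for all } u_1,u_2 \in [0,\infty)\}.$$ For $x \in C$ and $v \ge 0$ put $\alpha_x(v) = \sup\{ x(s) : s \in \{-1\}\cup[v,\infty)\}$. Then: (i) $|\alpha_x(u_1) - \alpha_x(u_2)| \le |u_1 - u_2|$ for all $x \in C$ and $u_1,u_2 \in [0,\infty)$; (ii) $|\alpha_x(u) - \alpha_y(u)| \le \|x-y\|$ for all $x,y \in C$ and $u \in [0,\infty)$. *)

From HB Require Import structures.
From mathcomp Require Import all_boot all_order all_algebra.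
From mathcomp Require Import all_classical all_reals all_analysis.
Set Implicit Arguments. Unset Strict Implicit. Unset Printing Implicit Defensive.
Import Order.TTheory GRing.Theory Num.Theory.
Import numFieldNormedType.Exports.
Local Open Scope classical_set_scope.
Local Open Scope ring_scope.

Section Defs.
Variable R : realType.

Definition Omega : set R := [set u | u = -1 \/ 0 <= u].

(* x (a function R -> R, only its values on Omega matter) is an element of E:
   bounded and continuous on Omega *)
Definition in_E (x : R -> R) : Prop :=
  (exists M : R, forall u, Omega u -> `|x u| <= M) /\
  {within Omega, continuous x}.

Definition in_C (x : R -> R) : Prop :=
  in_E x /\
  (forall u, Omega u -> 0 <= x u <= 1) /\
  (forall u1 u2, 0 <= u1 -> 0 <= u2 -> `|x u1 - x u2| <= `|u1 - u2|).

Definition supnorm (x : R -> R) : R := sup [set `|x u| | u in Omega].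

Definition alpha (x : R -> R) (v : R) : R :=
  sup [set x s | s in [set s | s = -1 \/ v <= s]].

End Defs.

From HB Require Import structures.
From mathcomp Require Import all_boot all_order all_algebra.
From mathcomp Require Import all_classical all_reals all_analysis.
From mathcomp Require Import lra.
Import Order.TTheory GRing.Theory Num.Theory.
Import numFieldNormedType.Exports.
Local Open Scope classical_set_scope.
Local Open Scope ring_scope.

(* Both estimates compare suprema pointwise.  Raising v from u1 to u2 can only
   shrink the tail {-1} U [v, oo), and every point s of [u1, u2) is within
   u2 - s of the point u2 still in the tail, so by the Lipschitz bound x s
   exceeds alpha_x(u2) by at most u2 - u1.  Replacing x by y moves every value
   on the tail, hence the supremum, by at most the sup distance. *)

Section Alpha.
Set Implicit Arguments. Unset Strict Implicit.
Variable R : realType.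
Implicit Types (x y : R -> R) (u v a : R).

Definition tail v : set R := [set s | s = -1 \/ v <= s].

Lemma tail_Omega v : 0 <= v -> tail v `<=` @Omega R.
Proof. by move=> v0 s [->|vs]; [left | right; apply: le_trans vs]. Qed.

Lemma tail_subset u1 u2 : u1 <= u2 -> tail u2 `<=` tail u1.
Proof. by move=> u12 s [->|u2s]; [left | right; apply: le_trans u2s]. Qed.

Lemma ge_alpha x v a : (forall s, tail v s -> x s <= a) -> alpha x v <= a.
Proof.
move=> xa; apply: ge_sup; first by exists (x (-1)), (-1) => //; left.
by move=> _ [s vs <-]; apply: xa.
Qed.

Lemma le_alpha x M v s : (forall u, Omega u -> x u <= M) -> 0 <= v ->
  tail v s -> x s <= alpha x v.
Proof.
move=> xM v0 vs; apply: sup_upper_bound; last by exists s.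
split; first by exists (x s), s.
by exists M => _ [t vt <-]; apply: xM; apply: tail_Omega vt.
Qed.

Lemma alpha_antitone x M u1 u2 : (forall u, Omega u -> x u <= M) ->
  0 <= u1 -> u1 <= u2 -> alpha x u2 <= alpha x u1.
Proof.
move=> xM u1_0 u12; apply: ge_alpha => s u2s.
exact: le_alpha xM u1_0 (tail_subset u12 u2s).
Qed.

Lemma alpha_le_addr x M u1 u2 : (forall u, Omega u -> x u <= M) ->
  (forall s t, 0 <= s -> 0 <= t -> `|x s - x t| <= `|s - t|) ->
  0 <= u1 -> u1 <= u2 -> alpha x u1 <= alpha x u2 + (u2 - u1).
Proof.
move=> xM xlip u1_0 u12; have u2_0 := le_trans u1_0 u12.
apply: ge_alpha => s u1s.
have [u2s|su2] := leP u2 s.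
  have := le_alpha xM u2_0 (or_intror u2s); lra.
case: u1s => [->|u1s].
  have := le_alpha xM u2_0 (or_introl erefl); lra.
have x_u2 := le_alpha xM u2_0 (or_intror (lexx u2)).
have := xlip s u2 (le_trans u1_0 u1s) u2_0.
rewrite (distrC s) (gtr0_norm (x := u2 - s)) ?subr_gt0 // ler_norml => /andP[].
lra.
Qed.

Lemma alpha_1lipschitz x M u1 u2 : (forall u, Omega u -> x u <= M) ->
  (forall s t, 0 <= s -> 0 <= t -> `|x s - x t| <= `|s - t|) ->
  0 <= u1 -> 0 <= u2 -> `|alpha x u1 - alpha x u2| <= `|u1 - u2|.
Proof.
move=> xM xlip.
wlog u12 : u1 u2 / u1 <= u2 => [wlog_u12 u1_0 u2_0|u1_0 _].
  have [u12|u21] := leP u1 u2; first exact: wlog_u12.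
  by rewrite distrC (distrC u1); apply: wlog_u12 => //; apply: ltW.
have := alpha_antitone xM u1_0 u12; have := alpha_le_addr xM xlip u1_0 u12.
rewrite (distrC u1) (ger0_norm (x := u2 - u1)) ?subr_ge0 // ler_norml.
by move=> ? ?; apply/andP; split; lra.
Qed.

Lemma dist_alpha_le x y M d u : (forall s, Omega s -> x s <= M) ->
  (forall s, Omega s -> y s <= M) ->
  (forall s, Omega s -> `|x s - y s| <= d) ->
  0 <= u -> `|alpha x u - alpha y u| <= d.
Proof.
move=> xM yM xy_d u0.
have le_alpha_add z w : (forall s, Omega s -> w s <= M) ->
    (forall s, Omega s -> `|z s - w s| <= d) -> alpha z u <= alpha w u + d.
  move=> wM zw_d; apply: ge_alpha => s us.
  have := zw_d s (tail_Omega u0 us); have := le_alpha wM u0 us.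
  by rewrite ler_norml => ? /andP[? ?]; lra.
have yx_d s : Omega s -> `|y s - x s| <= d by rewrite distrC; apply: xy_d.
have := le_alpha_add _ _ yM xy_d; have := le_alpha_add _ _ xM yx_d.
by rewrite ler_norml => ? ?; apply/andP; split; lra.
Qed.

Lemma dist_le_supnorm x y : (forall s, Omega s -> 0 <= x s <= 1) ->
  (forall s, Omega s -> 0 <= y s <= 1) ->
  forall u, Omega u -> `|x u - y u| <= supnorm (x \- y).
Proof.
move=> x01 y01 u Ou; apply: sup_upper_bound; last by exists u.
split; first by exists `|x u - y u|, u.
exists 1 => _ [s Os <-] /=.
move: (x01 s Os) (y01 s Os) => /andP[? ?] /andP[? ?].
by rewrite ler_norml; apply/andP; split; lra.
Qed.

End Alpha.

Theorem lemma2p2 (R : realType) :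
  (forall (x : R -> R) (u1 u2 : R), in_C x -> 0 <= u1 -> 0 <= u2 ->
      `|alpha x u1 - alpha x u2| <= `|u1 - u2|) /\
  (forall (x y : R -> R) (u : R), in_C x -> in_C y -> 0 <= u ->
      `|alpha x u - alpha y u| <= supnorm (x \- y)).
Proof.
have le1 (x : R -> R) : (forall u, Omega u -> 0 <= x u <= 1) ->
    forall u, Omega u -> x u <= 1.
  by move=> x01 u /x01 /andP[].
split=> [x u1 u2 [_ [x01 xlip]]|x y u [_ [x01 _]] [_ [y01 _]]].
  exact: alpha_1lipschitz (le1 x x01) xlip.
exact: dist_alpha_le (le1 x x01) (le1 y y01) (dist_le_supnorm x01 y01).
Qed.
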